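(* Let $p$ be a prime with $p\equiv 1$ or $6\pmod 7$ and $p\ne 13$. Define $\phi_2,\phi_3\in\overline{\mathbb{F}}_p[t]$ by: if $p\equiv6\pmod7$, $\phi_2=f\big(\tfrac{2p-5}{7},\tfrac{2p-5}{7},\tfrac{p-6}{7}\big)$ and $\phi_3=f\big(\tfrac{3p-4}{7},\tfrac{3p-4}{7},\tfrac{5p-2}{7}\big)$; if $p\equiv1\pmod7$, $\phi_2=f\big(\tfrac{2p-2}{7},\tfrac{2p-2}{7},\tfrac{p-1}{7}\big)$ and $\phi_3=f\big(\tfrac{3p-3}{7},\tfrac{3p-3}{7},\tfrac{5p-5}{7}\big)$. Then there exists $\alpha\in\overline{\mathbb{F}}_p\setminus\{0,1\}$ with $\phi_2(\alpha)=0$ and $\phi_3(\alpha)\ne0$, and there exists $\alpha'\in\overline{\mathbb{F}}_p\setminus\{0,1\}$ with $\phi_2(\alpha')\ne0$ and $\phi_3(\alpha')=0$.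
   Context: For non-negative integers $a,b,c$, $f(a,b,c)\in\overline{\mathbb{F}}_p[t]$ is $f(a,b,c)=\sum_{i_2+i_3=c}\binom{a}{i_2}\binom{b}{i_3}t^{i_2}$ (binomial coefficients reduced mod $p$, $\binom{n}{i}=0$ for $i<0$ or $i>n$). (These $\phi_2,\phi_3$ are the Hasse–Witt entries of the family of curves $y^7=x^3(x-t)(x-1)^2\cdots$ with monodromy $(7,4,(3,1,1,2))$ at the characters $\zeta_7^2,\zeta_7^3$, but the claim concerns only the explicit polynomials.) *)

From HB Require Import structures.
From mathcomp Require Import all_boot all_order all_algebra.
Set Implicit Arguments. Unset Strict Implicit. Unset Printing Implicit Defensive.
Import GRing.Theory.
Local Open Scope ring_scope.

(* f(a,b,c) = sum_{i2+i3=c} C(a,i2) C(b,i3) t^{i2}, coefficients reduced in K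
   (the nat-cast %:R reduces mod p when K has characteristic p).
   'C(n,k) = 0 for k > n, matching the paper's convention. *)
Definition fpoly (K : nzRingType) (a b c : nat) : {poly K} :=
  \sum_(i < c.+1) ('C(a, i) * 'C(b, c - i))%:R *: 'X^i.

(* phi_2 and phi_3 depending on p mod 7 (p = 6 mod 7 or p = 1 mod 7).
   The divisions below are exact in the relevant cases. *)
Definition phi2 (K : nzRingType) (p : nat) : {poly K} :=
  if (p %% 7 == 6)%N
  then fpoly K ((2 * p - 5) %/ 7) ((2 * p - 5) %/ 7) ((p - 6) %/ 7)
  else fpoly K ((2 * p - 2) %/ 7) ((2 * p - 2) %/ 7) ((p - 1) %/ 7).

Definition phi3 (K : nzRingType) (p : nat) : {poly K} :=
  if (p %% 7 == 6)%N
  then fpoly K ((3 * p - 4) %/ 7) ((3 * p - 4) %/ 7) ((5 * p - 2) %/ 7)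
  else fpoly K ((3 * p - 3) %/ 7) ((3 * p - 3) %/ 7) ((5 * p - 5) %/ 7).

From HB Require Import structures.
From mathcomp Require Import all_boot all_order all_algebra.
From mathcomp Require Import zify ring.
Set Implicit Arguments. Unset Strict Implicit. Unset Printing Implicit Defensive.
Import GRing.Theory.
Local Open Scope ring_scope.

(* Up to a power of [t], [phi2] and [phi3] are [G n := f(n, n, q)] for some [n1 < n2]
   with [2 <= q <= n1] and [2 n2 < p].  Each [G n] has degree [q] and is a multiple of
   the hypergeometric polynomial 2F1(-n, -q; n - q + 1; t), so it satisfies
   [t (1 - t) G'' + ... = 0]; as [G n] does not vanish at [0] or [1], every root is an
   ordinary point of this equation and hence a simple root.  Two polynomials of the same
   degree with simple roots, over an algebraically closed field, either are proportional
   or each has a root that the other lacks; proportionality is ruled out by the ratio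
   [n q / (n - q + 1)] of the two lowest coefficients of [G n]. *)

Lemma prime_ndvd_fact p m : prime p -> (m < p)%N -> ~~ (p %| m`!)%N.
Proof.
move=> p_pr; elim: m => [|m IHm] ltmp.
  by rewrite fact0 dvdn1 neq_ltn prime_gt1 ?orbT.
by rewrite factS Euclid_dvdM // negb_or gtnNdvd // IHm // ltnW.
Qed.

Lemma pchar_natr_neq0 (K : nzRingType) p m :
  p \in [pchar K] -> (0 < m < p)%N -> m%:R != 0 :> K.
Proof. by move=> pcharK /andP[m_gt0 ltmp]; rewrite -(dvdn_pcharf pcharK) gtnNdvd. Qed.

Lemma pchar_bin_neq0 (K : nzRingType) p m j :
  prime p -> p \in [pchar K] -> (j <= m < p)%N -> 'C(m, j)%:R != 0 :> K.
Proof.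
move=> p_pr pcharK /andP[lejm ltmp]; rewrite -(dvdn_pcharf pcharK).
apply: contraNN (prime_ndvd_fact p_pr ltmp) => /(dvdn_mulr (j`! * (m - j)`!)%N).
by rewrite bin_fact.
Qed.

Section Fpoly.
Variable K : nzRingType.

Lemma fpolyE n m c : fpoly K n m c = \poly_(i < c.+1) ('C(n, i) * 'C(m, c - i))%:R.
Proof. by rewrite /fpoly -(poly_def c.+1 (fun i => ('C(n, i) * 'C(m, c - i))%:R)). Qed.

Lemma coef_fpoly n m c i :
  (fpoly K n m c)`_i = if (i < c.+1)%N then ('C(n, i) * 'C(m, c - i))%:R else 0.
Proof. by rewrite fpolyE coef_poly. Qed.

Lemma horner0_fpoly n m c : (fpoly K n m c).[0] = 'C(m, c)%:R.
Proof. by rewrite horner_coef0 coef_fpoly bin0 mul1n subn0. Qed.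

Lemma horner1_fpoly n m c : (fpoly K n m c).[1] = 'C(n + m, c)%:R.
Proof.
rewrite /fpoly horner_sum -binomial.Vandermonde natr_sum; apply: eq_bigr => i _.
by rewrite hornerZ hornerXn expr1n mulr1.
Qed.

Lemma size_fpoly n m c : 'C(n, c)%:R != 0 :> K -> size (fpoly K n m c) = c.+1.
Proof. by move=> nz_lead; rewrite fpolyE size_poly_eq // subnn bin0 muln1. Qed.

(* Only the coefficients of index [c - n <= i <= n] are nonzero, and they are
   symmetric under [i |-> c - i]. *)
Lemma fpoly_shift n c : (n <= c <= n + n)%N ->
  fpoly K n n c = 'X^(c - n) * fpoly K n n (n + n - c).
Proof.
move=> /andP[le_nc le_c2n]; apply/polyP => i; rewrite coefXnM !coef_fpoly.
have [lt_i_cn | le_cn_i] := ltnP i (c - n).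
  by rewrite ifT ?(@bin_small n (c - i)) ?muln0 //; lia.
have [lt_n_i | le_i_n] := ltnP n i.
  rewrite [RHS]ifF; last by lia.
  by case: ifP => // _; rewrite bin_small ?mul0n.
rewrite !ifT; try lia.
have -> : (i - (c - n) = n - (c - i))%N by lia.
have -> : (n + n - c - (n - (c - i)) = n - i)%N by lia.
by rewrite !bin_sub 1?mulnC //; lia.
Qed.

End Fpoly.

Section HypergeometricEquation.
Variable R : comNzRingType.
Implicit Types (F : {poly R}) (a b c : R).

Lemma coefXM_deriv F i : ('X * F^`())`_i = F`_i * i%:R.
Proof. by rewrite coefXM coef_deriv; case: i => [|i] /=; rewrite ?mulr0 // mulr_natr. Qed.

Lemma coefXXM_deriv2 F i : ('X * ('X * F^`()^`()))`_i = F`_i * (i%:R * (i%:R - 1)).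
Proof.
have -> : 'X * ('X * F^`()^`()) = 'X * ('X * F^`())^`() - 'X * F^`().
  by rewrite derivM derivX mul1r; ring.
by rewrite coefB !coefXM_deriv; ring.
Qed.

(* The hypothesis is the coefficient recurrence of the Gauss series 2F1(a, b; c; X). *)
Lemma hypergeometric_ode a b c F :
  (forall j, F`_j.+1 * j.+1%:R * (j%:R + c) = F`_j * (j%:R + a) * (j%:R + b)) ->
  'X * (1 - 'X) * F^`()^`() + (c%:P - (a + b + 1) *: 'X) * F^`() = (a * b)%:P * F.
Proof.
move=> rec; apply/polyP => j.
have -> : 'X * (1 - 'X) * F^`()^`() + (c%:P - (a + b + 1) *: 'X) * F^`() =
    'X * F^`()^`() - 'X * ('X * F^`()^`()) + c *: F^`() - (a + b + 1) *: ('X * F^`()).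
  by rewrite -!mul_polyC; ring.
rewrite coefCM coefB coefD coefB !coefZ coefXXM_deriv2 !coefXM_deriv !coef_deriv.
rewrite -[F`_j.+1 *+ _]mulr_natr; apply/eqP; rewrite -subr_eq0; apply/eqP.
transitivity (F`_j.+1 * j.+1%:R * (j%:R + c) - F`_j * (j%:R + a) * (j%:R + b)); first ring.
by rewrite rec subrr.
Qed.

End HypergeometricEquation.

(* [fpoly n n k] is a multiple of 2F1(-n, -k; n - k + 1; X). *)
Lemma coef_fpoly_rec (R : comNzRingType) n k j : (k <= n)%N ->
  (fpoly R n n k)`_j.+1 * j.+1%:R * (j%:R + (n%:R - k%:R + 1)) =
  (fpoly R n n k)`_j * (j%:R - n%:R) * (j%:R - k%:R).
Proof.
move=> le_kn; rewrite !coef_fpoly.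
have [lt_jk | le_kj] := ltnP j k; last first.
  rewrite ifF ?mul0r; last by apply/negbTE; rewrite -leqNgt.
  case: ifP => [le_jk | _]; last by rewrite !mul0r.
  by rewrite (_ : j = k) ?subrr ?mulr0 //; lia.
rewrite !ifT ?natrM; try lia.
have bin_j : j.+1%:R * 'C(n, j.+1)%:R = (n%:R - j%:R) * 'C(n, j)%:R :> R.
  by rewrite -!natrM mul_bin_left natrM natrB //; lia.
have bin_kj : (j%:R + (n%:R - k%:R + 1)) * 'C(n, k - j.+1)%:R =
               (k%:R - j%:R) * 'C(n, k - j)%:R :> R.
  have := mul_bin_left n (k - j.+1).
  rewrite (_ : (k - j.+1).+1 = k - j)%N; last by lia.
  rewrite (_ : n - (k - j.+1) = j + (n - k) + 1)%N; last by lia.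
  move/(congr1 (GRing.natmul (1 : R))).
  by rewrite !natrM !natrD !natrB // => [->|]; [rewrite addrA | exact: ltnW].
transitivity ((j.+1%:R * 'C(n, j.+1)%:R) *
              ((j%:R + (n%:R - k%:R + 1)) * 'C(n, k - j.+1)%:R) : R); first ring.
by rewrite bin_j bin_kj; ring.
Qed.

Lemma coef1_fpoly (R : comNzRingType) n k : (k <= n)%N ->
  (fpoly R n n k)`_1 * (n%:R - k%:R + 1) = (fpoly R n n k)`_0 * (n%:R * k%:R).
Proof.
move=> le_kn; have := coef_fpoly_rec R 0 le_kn.
by rewrite mulr0n mulr1n mulr1 add0r => ->; ring.
Qed.

Lemma deriv_mul_XsubC_exp (R : comNzRingType) (z : R) (Q : {poly R}) m :
  exists2 Q1 : {poly R}, (Q * ('X - z%:P) ^+ m.+1)^`() = Q1 * ('X - z%:P) ^+ m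
                       & Q1.[z] = Q.[z] *+ m.+1.
Proof.
exists (Q^`() * ('X - z%:P) + Q *+ m.+1).
  by rewrite derivM deriv_exp derivXsubC mul1r exprS; ring.
by rewrite hornerD hornerMn !hornerE subrr mulr0 add0r.
Qed.

Definition simple_roots (R : idomainType) (F : {poly R}) :=
  forall z, ~~ (('X - z%:P) ^+ 2 %| F).

(* At an ordinary point [z] of [P2 F'' + P1 F' = P0 F], a root of multiplicity
   [m >= 2] would force [m (m - 1) = 0] from the lowest-order term at [z]. *)
Lemma ode_ordinary_root_simple (R : fieldType) (P2 P1 P0 F : {poly R}) z :
  P2 * F^`()^`() + P1 * F^`() = P0 * F -> ~~ root P2 z -> F != 0 ->
  (forall m, (0 < m < size F)%N -> m%:R != 0 :> R) ->
  ~~ (('X - z%:P) ^+ 2 %| F).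
Proof.
move=> ode P2z F_neq0 natr_neq0; apply/negP => dvdF.
have [m /= [Q Qz defF]] := multiplicity_XsubC F z; rewrite F_neq0 /= in Qz.
have mupF : mup z F = m by rewrite defF mupMr // mup_XsubCX eqxx.
have m_ge2 : (2 <= m)%N by rewrite -mupF mup_geq.
have m_lt_size : (m < size F)%N.
  by rewrite -(size_exp_XsubC m z) dvdp_leq // -mup_geq // mupF.
set E := 'X - z%:P in defF.
have E_neq0 : E != 0 by rewrite polyXsubC_eq0.
case: m m_ge2 m_lt_size defF {mupF} => [|[|n]] // _ n_lt defF.
have [Q1 dF eQ1] := deriv_mul_XsubC_exp z Q n.+1.
have [Q2 dF1 eQ2] := deriv_mul_XsubC_exp z Q1 n.
rewrite -/E in dF dF1; rewrite defF dF dF1 in ode.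
have low : P2 * Q2 + (P1 * Q1 - P0 * Q * E) * E = 0.
  apply: (mulIf (expf_neq0 n E_neq0)); rewrite mul0r.
  transitivity (P2 * (Q2 * E ^+ n) + P1 * (Q1 * E ^+ n.+1) - P0 * (Q * E ^+ n.+2)).
    by rewrite !exprS; ring.
  by rewrite ode subrr.
have Ez : E.[z] = 0 by rewrite hornerXsubC subrr.
have := congr1 (fun P => P.[z]) low.
rewrite /= hornerD !hornerM Ez mulr0 addr0 horner0 => /eqP; rewrite mulf_eq0.
rewrite (negbTE (P2z : P2.[z] != 0)) eQ2 eQ1 -mulrnA -mulr_natr mulf_eq0.
rewrite (negbTE (Qz : Q.[z] != 0)) /=.
by apply/negP; rewrite natrM mulf_neq0 ?natr_neq0 //; lia.
Qed.

Lemma eqp_coef_cross (R : idomainType) (P Q : {poly R}) i j :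
  P %= Q -> P`_i * Q`_j = P`_j * Q`_i.
Proof.
move=> /eqp_eq eqPQ.
have coefE k : lead_coef Q * P`_k = lead_coef P * Q`_k by rewrite -!coefZ eqPQ.
have [->|Q_neq0] := eqVneq Q 0; first by rewrite !coef0 !mulr0.
apply: (@mulfI _ (lead_coef Q)); first by rewrite lead_coef_eq0.
by rewrite !mulrA !coefE mulrAC.
Qed.

Section FpolyPrimeChar.
Variables (K : fieldType) (p : nat).
Hypotheses (p_pr : prime p) (pcharK : p \in [pchar K]).

Lemma fpoly_root_neq01 n k z : (k <= n)%N -> (n + n < p)%N ->
  root (fpoly K n n k) z -> (z != 0) && (z != 1).
Proof.
move=> le_kn lt_2n_p rootz; apply/andP; split; apply: contraTneq rootz => ->.
  by rewrite /root horner0_fpoly (pchar_bin_neq0 p_pr pcharK) //; lia.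
by rewrite /root horner1_fpoly (pchar_bin_neq0 p_pr pcharK) //; lia.
Qed.

Lemma fpoly_simple_roots n k : (k <= n)%N -> (n + n < p)%N ->
  simple_roots (fpoly K n n k).
Proof.
move=> le_kn lt_2n_p z; set F := fpoly K n n k.
have sizeF : size F = k.+1 by rewrite size_fpoly // (pchar_bin_neq0 p_pr pcharK) //; lia.
have [rootz | nrootz] := boolP (root F z); last first.
  apply: contra nrootz => dvd2.
  by rewrite -dvdp_XsubCl (dvdp_trans _ dvd2) // expr2 dvdp_mulIl.
case/andP: (fpoly_root_neq01 le_kn lt_2n_p rootz) => z_neq0 z_neq1.
apply: (ode_ordinary_root_simple (hypergeometric_ode (fun j => coef_fpoly_rec K j le_kn))).
- by rewrite rootM rootX negb_or z_neq0 /root !hornerE subr_eq0 eq_sym z_neq1.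
- by rewrite -size_poly_gt0 sizeF.
- by move=> m; rewrite sizeF => m_range; apply: (pchar_natr_neq0 pcharK); lia.
Qed.

(* The ratio of the two lowest coefficients of [fpoly n n k] is [n k / (n - k + 1)],
   which is injective in [n] when [k >= 2]. *)
Lemma fpoly_neqp n1 n2 k : (2 <= k <= n1)%N -> (n1 < n2 < p)%N ->
  ~~ (fpoly K n1 n1 k %= fpoly K n2 n2 k).
Proof.
move=> /andP[k_ge2 le_kn1] /andP[lt_n12 lt_n2p]; apply/negP => eqF.
have le_kn2 : (k <= n2)%N by lia.
have := eqp_coef_cross 1 0 eqF.
have := coef1_fpoly K le_kn1; have := coef1_fpoly K le_kn2.
set F1 := fpoly K n1 n1 k; set F2 := fpoly K n2 n2 k => rec2 rec1 cross.
have : F1`_0 * F2`_0 * k%:R * ((k - 1)%:R * (n2 - n1)%:R) = 0.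
  rewrite !natrB ?(ltnW k_ge2) ?(ltnW lt_n12) //.
  transitivity ((F1`_1 * F2`_0 - F1`_0 * F2`_1) * (n1%:R - k%:R + 1) * (n2%:R - k%:R + 1)
    - F2`_0 * (n2%:R - k%:R + 1) * (F1`_1 * (n1%:R - k%:R + 1) - F1`_0 * (n1%:R * k%:R))
    + F1`_0 * (n1%:R - k%:R + 1) * (F2`_1 * (n2%:R - k%:R + 1) - F2`_0 * (n2%:R * k%:R)));
    first ring.
  by rewrite cross rec1 rec2 !subrr; ring.
rewrite /F1 /F2 !coef_fpoly !bin0 !mul1n !subn0.
apply/eqP; rewrite !mulf_neq0 ?(pchar_bin_neq0 p_pr pcharK) ?(pchar_natr_neq0 pcharK) //.
all: lia.
Qed.

End FpolyPrimeChar.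

Lemma simple_roots_prod_XsubC_uniq (R : idomainType) (rs : seq R) :
  simple_roots (\prod_(a <- rs) ('X - a%:P)) -> uniq rs.
Proof.
elim: rs => [//|a rs IHrs] simple /=; apply/andP; split.
  apply/negP => a_in; move: (simple a); rewrite big_cons expr2 dvdp_mul //.
  by rewrite dvdp_XsubCl root_prod_XsubC.
by apply: IHrs => z; move: (simple z); apply: contra; rewrite big_cons; apply: dvdp_mull.
Qed.

Lemma exists_root_separating (K : closedFieldType) (F G : {poly K}) :
  simple_roots F -> size F = size G -> ~~ (F %= G) ->
  exists2 z, root F z & ~~ root G z.
Proof.
move=> simpleF sizeFG neqFG.
have F_neq0 : F != 0 by apply: contraNneq (simpleF 0) => ->; rewrite dvdp0.
have [rs defF] := closed_field_poly_normal F.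
have lcF_neq0 : lead_coef F != 0 by rewrite lead_coef_eq0.
have [/hasP[z z_in nrootz] | /hasPn rootsG] := boolP (has (fun z => ~~ root G z) rs).
  by exists z; rewrite // defF rootZ // root_prod_XsubC.
have uniq_rs : uniq rs.
  by apply: simple_roots_prod_XsubC_uniq => z; rewrite -(dvdpZr _ _ lcF_neq0) -defF.
have dvdFG : F %| G.
  rewrite defF dvdpZl // uniq_roots_dvdp ?uniq_rootsE //.
  by apply/allP => z /rootsG; rewrite negbK.
by rewrite -(dvdp_size_eqp dvdFG) sizeFG eqxx in neqFG.
Qed.

Lemma phi_fpoly (K : nzRingType) p :
  prime p -> (p %% 7 = 1 \/ p %% 7 = 6)%N -> p <> 13%N ->
  exists q e, [/\ (2 <= q)%N, (3 * q + 2 * e + (3 * q + 2 * e) < p)%N,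
    phi2 K p = fpoly K (2 * q + e) (2 * q + e) q &
    phi3 K p = 'X^(2 * q + 2 * e) * fpoly K (3 * q + 2 * e) (3 * q + 2 * e) q].
Proof.
move=> p_pr p_mod7 p_neq13.
have p_div := divn_eq p 7; set q := (p %/ 7)%N in p_div *.
have [e [e_le1 p_eq phi2E phi3E]] : exists e, [/\ (e <= 1)%N, p = (7 * q + 1 + 5 * e)%N,
    phi2 K p = fpoly K (2 * q + e) (2 * q + e) q &
    phi3 K p = fpoly K (3 * q + 2 * e) (3 * q + 2 * e) (5 * q + 4 * e)].
  rewrite /phi2 /phi3; case: p_mod7 => p_mod7; rewrite p_mod7 /=.
    by exists 0%N; split; try lia; congr fpoly; lia.
  by exists 1%N; split; try lia; congr fpoly; lia.
have q_ge2 : (2 <= q)%N.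
  rewrite leqNgt; apply/negP => lt_q2; move: p_pr p_neq13.
  by have [->|[->|[->|->]]] : (p = 1 \/ p = 6 \/ p = 8 \/ p = 13)%N by lia.
exists q, e; split => //; first lia.
rewrite phi3E fpoly_shift; last lia.
by congr ('X^_ * fpoly _ _ _ _); lia.
Qed.

Theorem lemma5p3 (p : nat) (K : closedFieldType) :
  prime p -> p \in [pchar K] ->
  (p %% 7 = 1 \/ p %% 7 = 6)%N -> p <> 13%N ->
  (exists a : K, [/\ a != 0, a != 1, (phi2 K p).[a] = 0 & (phi3 K p).[a] != 0]) /\
  (exists a : K, [/\ a != 0, a != 1, (phi2 K p).[a] != 0 & (phi3 K p).[a] = 0]).
Proof.
move=> p_pr pcharK p_mod7 p_neq13.
have [q [e [q_ge2 lt_2n2_p -> ->]]] := phi_fpoly K p_pr p_mod7 p_neq13.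
set n1 := (2 * q + e)%N; set n2 := (3 * q + 2 * e)%N in lt_2n2_p *.
have [le_qn1 le_qn2 lt_2n1_p] : [/\ q <= n1, q <= n2 & n1 + n1 < p]%N by split; lia.
have neqF : ~~ (fpoly K n1 n1 q %= fpoly K n2 n2 q) by apply: (fpoly_neqp p_pr pcharK); lia.
have sizeF : size (fpoly K n1 n1 q) = size (fpoly K n2 n2 q).
  by rewrite !size_fpoly // (pchar_bin_neq0 p_pr pcharK) //; lia.
split.
  have [z rootz nrootz] := exists_root_separating
    (fpoly_simple_roots p_pr pcharK le_qn1 lt_2n1_p) sizeF neqF.
  case/andP: (fpoly_root_neq01 p_pr pcharK le_qn1 lt_2n1_p rootz) => z_neq0 z_neq1.
  exists z; split => //; first exact/eqP.
  by rewrite hornerM hornerXn mulf_neq0 ?expf_neq0.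
rewrite eqp_sym in neqF.
have [z rootz nrootz] := exists_root_separating
  (fpoly_simple_roots p_pr pcharK le_qn2 lt_2n2_p) (esym sizeF) neqF.
case/andP: (fpoly_root_neq01 p_pr pcharK le_qn2 lt_2n2_p rootz) => z_neq0 z_neq1.
by exists z; split => //; rewrite hornerM (eqP rootz) mulr0.
Qed.
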